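(* Consider the online instance reservation problem described in the context, with parameters $p>0$, $\alpha\in[0,1)$, $\tau\ge 1$, and let $\beta = 1/(1-\alpha)$. Fix an arbitrary demand sequence $d_1,\dots,d_T$. Let $n_\beta$ be the total number of instances reserved by the deterministic online algorithm $A_\beta$, and let $n_{\mathrm{OPT}}$ be the total number of instances reserved, $\sum_t r^*_t$, by an optimal offline solution $(o^*_t, r^*_t)$ of the problem for this demand sequence. Then $n_\beta \le n_{\mathrm{OPT}}$.
   Context: Instance reservation problem: time is slotted $t=1,2,\dots,T$. At each time $t$ a demand $d_t\in\{0,1,2,\dots\}$ (number of instances needed) arrives; set $d_t=0$ for $t\le 0$. A user chooses integers $o_t\ge 0$ (on-demand instances used at $t$) and $r_t\ge 0$ (instances newly reserved at $t$; $r_t=0$ for $t\le 0$), subject to $o_t+\sum_{i=t-\tau+1}^{t} r_i\ge d_t$ for all $t$, where $\tau$ is the reservation period. The reservation fee is normalized to $1$, the on-demand hourly rate is $p$ (the paper assumes throughout $p\ll 1$), and reserved instances run at discounted rate $\alpha p$ with $\alpha\in[0,1]$. The total cost is $C=\sum_{t=1}^T\big(o_t p + r_t + \alpha p(d_t-o_t)\big)$. The optimal offline solution (OPT) minimizes $C$ knowing the whole sequence $d_1,\dots,d_T$ in advance; an online algorithm chooses $o_t,r_t$ knowing only $d_1,\dots,d_t$. Algorithm $A_z$ (for a threshold $z\ge 0$): maintain integers $x_i$ for all integers $i$, initially $x_i=0$. At each time $t$, upon arrival of $d_t$: while $p\cdot\big|\{i: t-\tau+1\le i\le t,\ d_i>x_i\}\big|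 > z$, do: increase $r_t$ by $1$; increase $x_i$ by $1$ for $i=t,\dots,t+\tau-1$; increase $x_i$ by $1$ for $i=t-\tau+1,\dots,t-1$ (a ''phantom'' reservation). After the loop, set $o_t=\max\{d_t-x_t,0\}$. $A_\beta$ denotes $A_z$ with $z=\beta=1/(1-\alpha)$. *)

From mathcomp Require Import all_boot all_order all_algebra.
Set Implicit Arguments. Unset Strict Implicit. Unset Printing Implicit Defensive.
Import Order.TTheory GRing.Theory Num.Theory.
Local Open Scope ring_scope.

(* Time slots are 1, 2, ..., T (naturals); demands d : nat -> nat, only
   d 1 .. d T are used (d_t = 0 for t <= 0 is encoded by restricting all
   windows to indices i >= 1). tau >= 1 is the reservation period. *)

Section Inst.
Variable R : realFieldType.

Definition active (tau : nat) (r : nat -> nat) (t : nat) : nat :=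
  (\sum_(t.+1 - tau <= i < t.+1 | (0 < i)%N) r i)%N.

Definition feasible (T tau : nat) (d o r : nat -> nat) : Prop :=
  forall t : nat, (1 <= t <= T)%N -> (d t <= o t + active tau r t)%N.

Definition cost (T : nat) (p alpha : R) (d o r : nat -> nat) : R :=
  \sum_(1 <= t < T.+1)
     ((o t)%:R * p + (r t)%:R + alpha * p * ((d t)%:R - (o t)%:R)).

Definition optimal (T tau : nat) (p alpha : R) (d o r : nat -> nat) : Prop :=
  feasible T tau d o r /\
  forall o' r' : nat -> nat, feasible T tau d o' r' ->
    cost T p alpha d o r <= cost T p alpha d o' r'.

Definition n_reserved (T : nat) (r : nat -> nat) : nat :=
  (\sum_(1 <= t < T.+1) r t)%N.

(* |{ i : t - tau + 1 <= i <= t, d_i > x_i }|  (indices i <= 0 never count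
   since d_i = 0 there) *)
Definition uncovered (tau : nat) (d x : nat -> nat) (t : nat) : nat :=
  (\sum_(t.+1 - tau <= i < t.+1 | (0 < i)%N) (x i < d i)%N)%N.

(* one (real + phantom) reservation at time t: x_i += 1 for
   i = t - tau + 1, ..., t + tau - 1 *)
Definition bump (tau : nat) (x : nat -> nat) (t : nat) : nat -> nat :=
  fun i => (x i + (t.+1 - tau <= i < t + tau))%N.

(* the while loop at time t, run with [fuel] as an iteration bound;
   returns the final x and the number r_t of iterations performed *)
Fixpoint loop (fuel : nat) (tau : nat) (p z : R) (d : nat -> nat)
  (x : nat -> nat) (t : nat) : (nat -> nat) * nat :=
  match fuel with
  | 0 => (x, 0%N)
  | f.+1 =>
      if z < p * (uncovered tau d x t)%:R then
        let xk := loop f tau p z d (bump tau x t) t in (xk.1, xk.2.+1)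
      else (x, 0%N)
  end.

(* A fuel that is always sufficient: after (max of the demands) iterations
   every x_i in the window is >= d_i, so the loop condition
   p * 0 > z fails (z >= 0). *)
Definition fuel (T : nat) (d : nat -> nat) : nat :=
  (\sum_(1 <= i < T.+1) d i).+1.

Fixpoint run (T tau : nat) (p z : R) (d : nat -> nat) (t : nat)
  : (nat -> nat) * nat :=
  match t with
  | 0 => (fun _ => 0%N, 0%N)
  | s.+1 =>
      let st := run T tau p z d s in
      let lr := loop (fuel T d) tau p z d st.1 s.+1 in
      (lr.1, (st.2 + lr.2)%N)
  end.

Definition n_alg (T tau : nat) (p z : R) (d : nat -> nat) : nat :=
  (run T tau p z d T).2.

End Inst.

From Pilot Require Import Defs.
From mathcomp Require Import all_boot all_order all_algebra.
From mathcomp Require Import zify ring lra.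
Import Order.TTheory GRing.Theory Num.Theory.

(* A_beta keeps the invariant that it has reserved no more instances than OPT
   up to the current time, and that, among its (real and phantom) reservations
   that have expired before a time i still in play, there are no more than
   among OPT's.  A reservation happens at t only when u > beta/p times of the
   window (t - tau, t] are uncovered.  If at that moment OPT had not reserved
   more than A_beta, the invariant shows that OPT's active reservations do not
   cover these u times either, so OPT pays on demand at each of them; one
   reservation at the start of the window instead saves (1 - alpha) p u - 1 > 0,
   contradicting optimality.  The same argument works for every threshold
   z >= beta. *)

Set Implicit Arguments.
Unset Strict Implicit.
Unset Printing Implicit Defensive.

Definition reserved_before (r : nat -> nat) (m : nat) : nat :=
  \sum_(0 <= j < m | 0 < j) r j.

Lemma reserved_before_mono r : {homo reserved_before r : m n / m <= n}.
Proof.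
by move=> m n mn; rewrite /reserved_before (big_cat_nat (leq0n m) mn) leq_addr.
Qed.

Lemma reserved_before_active tau r i :
  reserved_before r i.+1 = reserved_before r (i.+1 - tau) + active tau r i.
Proof.
by rewrite /reserved_before /active (big_cat_nat (leq0n (i.+1 - tau)) (leq_subr _ _)).
Qed.

Lemma reserved_before_n_reserved r T :
  reserved_before r T.+1 = n_reserved T r.
Proof. by rewrite /n_reserved (@big_nat_widenl _ _ _ _ 0). Qed.

Lemma sum_indicator_nat a b s (P : pred nat) :
  \sum_(a <= j < b | P j) (j == s : nat) = ((a <= s < b) && P s : nat).
Proof. by rewrite -big_mkcondr big_nat1_cond_eq; case: ifP. Qed.

Section Trade.
Variables (R : realFieldType) (p alpha : R) (T tau : nat) (d o r : nat -> nat).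
Variables (s : nat) (relief : nat -> bool).

Lemma active_trade i :
  active tau (fun j => r j + (j == s)) i =
  active tau r i + ((i.+1 - tau <= s < i.+1) && (0 < s)).
Proof. by rewrite /active big_split sum_indicator_nat. Qed.

Lemma feasible_trade : feasible T tau d o r -> 0 < s ->
  (forall i, relief i -> 0 < o i /\ i.+1 - tau <= s <= i) ->
  feasible T tau d (fun i => o i - relief i) (fun j => r j + (j == s)).
Proof.
move=> feas s_gt0 hrelief i iT; have := feas i iT; rewrite active_trade s_gt0.
case ri: (relief i); last by rewrite subn0; lia.
by have [] := hrelief i ri; lia.
Qed.

Local Open Scope ring_scope.

Lemma cost_trade : (forall i, relief i -> 0 < o i)%N -> (1 <= s <= T)%N ->
  cost T p alpha d o r =
  cost T p alpha d (fun i => o i - relief i)%N (fun j => r j + (j == s))%N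
  + (\sum_(1 <= i < T.+1) relief i)%N%:R * ((1 - alpha) * p) - 1.
Proof.
move=> hrelief sT; rewrite -addrA.
have -> : (\sum_(1 <= i < T.+1) relief i)%N%:R * ((1 - alpha) * p) - 1 =
    \sum_(1 <= i < T.+1) ((relief i)%:R * ((1 - alpha) * p) - (i == s)%:R).
  by rewrite sumrB -mulr_suml -!natr_sum sum_indicator_nat ltnS sT.
rewrite /cost -big_split /=; apply: eq_bigr => i _.
have -> : (o i)%:R = (o i - relief i)%N%:R + (relief i)%:R :> R.
  by rewrite -natrD; case ri: (relief i); rewrite ?subn0 ?addn0 // subnK ?hrelief.
rewrite natrD; ring.
Qed.

End Trade.

Lemma uncovered_sum tau d x t T : t <= T ->
  uncovered tau d x t =
  \sum_(1 <= i < T.+1) [&& 0 < i, t.+1 - tau <= i, i <= t & x i < d i].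
Proof.
move=> tT; rewrite /uncovered (@big_nat_widen _ _ _ _ t.+1 T.+1) //.
rewrite (@big_nat_widenl _ _ _ _ 0) // [RHS](@big_nat_widenl _ _ _ _ 0) //.
rewrite [LHS]big_mkcond [RHS]big_mkcond; apply: eq_bigr => i _ /=; rewrite ltnS.
by case: (0 < i); case: (t.+1 - tau <= i); case: (i <= t).
Qed.

(* [x i] counts the reservations of the algorithm, real or phantom, that cover
   [i]; for [i > t - tau] the other [n - x i] ones were made at times [<= i - tau].
   The invariant bounds both counts by the corresponding counts of OPT. *)
Definition dominated tau (r : nat -> nat) t (x : nat -> nat) n :=
  n <= reserved_before r t.+1 /\
  forall i, t < i + tau -> n <= x i + reserved_before r (i.+1 - tau).

Lemma dominated_deficit tau d r t x n i : dominated tau r t x n ->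
  reserved_before r t.+1 <= n -> t.+1 - tau <= i <= t -> x i < d i ->
  active tau r i < d i.
Proof.
move=> [_ hx] saturated /andP[ti it] xd; have := hx i.
have := reserved_before_active tau r i.
have := @reserved_before_mono r i.+1 t.+1 it.
lia.
Qed.

Lemma dominated_bump tau r t x n : dominated tau r t x n ->
  n < reserved_before r t.+1 -> dominated tau r t (Defs.bump tau x t) n.+1.
Proof.
move=> [_ hx] n_lt; split=> // i ti; have := hx i ti; rewrite /Defs.bump.
case: (ltnP i (t + tau)) => hi.
  have -> : t.+1 - tau <= i by lia.
  by rewrite /=; lia.
have := @reserved_before_mono r t.+1 (i.+1 - tau); lia.
Qed.

Section Optimal.
Variables (R : realFieldType) (p alpha z : R) (T tau : nat) (d o r : nat -> nat).
Local Open Scope ring_scope.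

Hypotheses (tau_gt0 : (0 < tau)%N) (alpha_lt1 : alpha < 1)
  (beta_le_z : (1 - alpha)^-1 <= z) (opt : optimal T tau p alpha d o r).

Lemma overload_reserved_before t x n : (1 <= t <= T)%N ->
  dominated tau r t x n -> z < p * (uncovered tau d x t)%:R ->
  (n < reserved_before r t.+1)%N.
Proof.
move=> /andP[t_ge1 tT] dom overload; rewrite ltnNge; apply/negP => saturated.
have [feas opt_le] := opt.
pose relief i := [&& 0 < i, t.+1 - tau <= i, i <= t & x i < d i]%N.
pose s := maxn 1 (t.+1 - tau).
have relief_o i : relief i -> (0 < o i)%N.
  move=> /and4P[i_gt0 ti it xd].
  have := dominated_deficit dom saturated (introT andP (conj ti it)) xd.
  have := feas i (introT andP (conj i_gt0 (leq_trans it tT))); lia.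
have relief_s i : relief i -> (0 < o i)%N /\ (i.+1 - tau <= s <= i)%N.
  by move=> ri; split; [exact: relief_o | move: ri => /and4P[]; rewrite /s; lia].
have s_gt0 : (0 < s)%N by rewrite leq_max.
have sT : (1 <= s <= T)%N by rewrite /s; lia.
have := opt_le _ _ (feasible_trade feas s_gt0 relief_s).
rewrite (cost_trade p alpha d r relief_o sT) -uncovered_sum //.
have gap : 0 < 1 - alpha by rewrite subr_gt0.
have : 1 < (1 - alpha) * (p * (uncovered tau d x t)%:R).
  have beta_lt := le_lt_trans beta_le_z overload.
  by rewrite -(ltr_pM2l gap) mulfV ?lt0r_neq0 in beta_lt.
lra.
Qed.

Lemma loop_dominated t : (1 <= t <= T)%N -> forall f x n,
  dominated tau r t x n ->
  dominated tau r t (loop f tau p z d x t).1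
                    (n + (loop f tau p z d x t).2).
Proof.
move=> tT; elim=> [|f IH] x n dom /=; first by rewrite addn0.
case: ifP => overload /=; last by rewrite addn0.
rewrite -addSnnS; apply/IH/dominated_bump => //.
exact: overload_reserved_before overload.
Qed.

Lemma run_dominated t : (t <= T)%N ->
  dominated tau r t (run T tau p z d t).1
                    (run T tau p z d t).2.
Proof.
elim: t => [|t IH] tT; first by split=> // i _; rewrite /reserved_before big_geq.
have [n_le hx] := IH (ltnW tT).
apply: loop_dominated; first by rewrite tT.
split=> [|i ti]; first exact: leq_trans n_le (reserved_before_mono r (leqnSn _)).
by apply: hx; lia.
Qed.

End Optimal.

Local Open Scope ring_scope.

Theorem lemma2 (R : realFieldType) (p alpha : R) (tau T : nat) (d : nat -> nat)
  (o_opt r_opt : nat -> nat) :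
  0 < p -> 0 <= alpha -> alpha < 1 -> (1 <= tau)%N ->
  optimal T tau p alpha d o_opt r_opt ->
  (n_alg T tau p (1 - alpha)^-1 d <= n_reserved T r_opt)%N.
Proof.
move=> _ _ alpha_lt1 tau_gt0 opt.
have [n_le _] := run_dominated tau_gt0 alpha_lt1 (lexx _) opt (leqnn T).
by rewrite /n_alg (leq_trans n_le) // reserved_before_n_reserved.
Qed.
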